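(* Let $Q$ be a quantity space over a field $K$. Then every non-zero $u\in Q$ is a unit quantity (unit element) for its dimension $[u]$.
   Context: A scalable monoid over a (unital, associative) ring $R$ is a monoid $X$ (identity $1_X$, product written $xy$) together with a map $R\times X\to X$, $(\alpha,x)\mapsto\alpha\cdot x$, such that $1\cdot x=x$, $\alpha\cdot(\beta\cdot x)=\alpha\beta\cdot x$ and $\alpha\cdot(xy)=(\alpha\cdot x)y=x(\alpha\cdot y)$. A quantity space over a field $K$ is a commutative scalable monoid $Q$ over $K$ for which there exists a basis, i.e. a finite set $\{e_1,\ldots,e_n\}$ of invertible elements of $Q$ such that every $x\in Q$ has a unique expansion $x=\mu\cdot\prod_{i=1}^n e_i^{k_i}$ with $\mu\in K$ and $k_i\in\mathbb{Z}$. On $Q$, $x\sim y$ iff $\alpha\cdot x=\beta\cdot y$ for some $\alpha,\beta\in K$; the equivalence class $[x]$ is the dimension of $x$. An element $x$ is non-zero if $x\neq0\cdot x$. A unit element for a class $\mathsf{C}$ is some $u\in\mathsf{C}$ such that every $x\in\mathsf{C}$ equals $\lambda\cdot u$ for some $\lambda\in K$, and such that $\lambda\cdot u=\lambda'\cdot u$ implies $\lambda=\lambda'$. *)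

From mathcomp Require Import all_boot all_order all_algebra.
Set Implicit Arguments. Unset Strict Implicit. Unset Printing Implicit Defensive.
Import GRing.Theory.
Local Open Scope ring_scope.

Definition scalable_monoid (R : ringType) (X : Type)
  (mul : X -> X -> X) (one : X) (scale : R -> X -> X) : Prop :=
  (forall x y z, mul x (mul y z) = mul (mul x y) z) /\
  (forall x, mul one x = x) /\
  (forall x, mul x one = x) /\
  (forall x, scale 1 x = x) /\
  (forall a b x, scale a (scale b x) = scale (a * b) x) /\
  (forall a x y, scale a (mul x y) = mul (scale a x) y
                 /\ scale a (mul x y) = mul x (scale a y)).

Definition zpow (X : Type) (mul : X -> X -> X) (one : X) (e einv : X) (k : int) : X :=
  match k with
  | Posz m => iter m (mul e) one
  | Negz m => iter m.+1 (mul einv) one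
  end.

Definition expansion (K : fieldType) (Q : Type) (mul : Q -> Q -> Q) (one : Q)
  (scale : K -> Q -> Q) (n : nat) (e einv : 'I_n -> Q) (mu : K) (k : 'I_n -> int) : Q :=
  scale mu (\big[mul/one]_(i < n) zpow mul one (e i) (einv i) (k i)).

Definition is_basis (K : fieldType) (Q : Type) (mul : Q -> Q -> Q) (one : Q)
  (scale : K -> Q -> Q) (n : nat) (e einv : 'I_n -> Q) : Prop :=
  (forall i, mul (e i) (einv i) = one /\ mul (einv i) (e i) = one) /\
  (forall x, exists mu k, x = expansion mul one scale e einv mu k) /\
  (forall x mu k mu' k',
      x = expansion mul one scale e einv mu k ->
      x = expansion mul one scale e einv mu' k' ->
      mu = mu' /\ (forall i, k i = k' i)).

Definition quantity_space (K : fieldType) (Q : Type) (mul : Q -> Q -> Q) (one : Q)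
  (scale : K -> Q -> Q) : Prop :=
  [/\ scalable_monoid mul one scale,
      (forall x y, mul x y = mul y x)
    & exists n (e einv : 'I_n -> Q), is_basis mul one scale e einv].

Definition qsim (K : fieldType) (Q : Type) (scale : K -> Q -> Q) (x y : Q) : Prop :=
  exists a b : K, scale a x = scale b y.

Definition dimension (K : fieldType) (Q : Type) (scale : K -> Q -> Q) (x : Q) : Q -> Prop :=
  fun y => qsim scale y x.

Definition nonzero (K : fieldType) (Q : Type) (scale : K -> Q -> Q) (x : Q) : Prop :=
  x <> scale 0 x.

Definition unit_element (K : fieldType) (Q : Type) (scale : K -> Q -> Q)
  (C : Q -> Prop) (u : Q) : Prop :=
  [/\ C u,
      (forall x, C x -> exists l : K, x = scale l u)
    & (forall l l' : K, scale l u = scale l' u -> l = l')].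

(** Write [u = mu . m] with [m] a monomial in the basis. If [u] is non-zero
    then [mu <> 0], since otherwise [0 . u = 0 . m = u]. An element [x] with
    [a . x = b . u] has an expansion [nu . m'], and uniqueness of expansions
    of [a . x = (a nu) . m' = (b mu) . m] forces [m' = m], so
    [x = (nu / mu) . u]; uniqueness of the scalar coefficient makes [l . u]
    determine [l]. *)

From mathcomp Require Import all_boot all_order all_algebra.
Set Implicit Arguments. Unset Strict Implicit. Unset Printing Implicit Defensive.
Import GRing.Theory.
Local Open Scope ring_scope.

Section Expansions.

Variables (K : fieldType) (Q : Type) (mul : Q -> Q -> Q) (one : Q).
Variables (scale : K -> Q -> Q) (n : nat) (e einv : 'I_n -> Q).
Hypothesis scaleA : forall a b x, scale a (scale b x) = scale (a * b) x.
Hypothesis basis_e : is_basis mul one scale e einv.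

Local Notation expansion := (expansion mul one scale e einv).

Lemma expansion_exists x : exists mu k, x = expansion mu k.
Proof. by case: basis_e => _ []. Qed.

Lemma expansion_inj mu k mu' k' :
  expansion mu k = expansion mu' k' -> mu = mu' /\ k =1 k'.
Proof. by case: basis_e => _ [_ uniq_e] E; apply: uniq_e erefl E. Qed.

Lemma eq_expansion mu k k' : k =1 k' -> expansion mu k = expansion mu k'.
Proof. by move=> kk'; congr scale; apply: eq_bigr => i _; rewrite kk'. Qed.

Lemma scale_expansion a mu k : scale a (expansion mu k) = expansion (a * mu) k.
Proof. exact: scaleA. Qed.

Lemma nonzero_expansion mu k : nonzero scale (expansion mu k) -> mu != 0.
Proof. by move=> nz; apply/eqP => mu0; apply: nz; rewrite scale_expansion mu0 mulr0. Qed.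

Lemma qsim_expansion mu k mu' k' :
  qsim scale (expansion mu k) (expansion mu' k') -> k =1 k'.
Proof. by case=> a [b]; rewrite !scale_expansion => /expansion_inj[]. Qed.

Lemma expansion_unit_element mu k : mu != 0 ->
  unit_element scale (dimension scale (expansion mu k)) (expansion mu k).
Proof.
move=> mu_neq0; split.
- by exists 1, 1.
- move=> x; have [nu [k' ->]] := expansion_exists x.
  move=> /qsim_expansion kk'; exists (nu / mu).
  by rewrite scale_expansion divfK //; apply: eq_expansion.
- by move=> l l'; rewrite !scale_expansion => /expansion_inj[/(mulIf mu_neq0)].
Qed.

End Expansions.

Theorem proposition3p7 (K : fieldType) (Q : Type) (mul : Q -> Q -> Q) (one : Q)
  (scale : K -> Q -> Q) :
  quantity_space mul one scale ->
  forall u : Q, nonzero scale u -> unit_element scale (dimension scale u) u.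
Proof.
case=> [[_ [_ [_ [_ [scaleA _]]]]] _ [n [e [einv basis_e]]]] u nz_u.
have [mu [k u_def]] := expansion_exists basis_e u.
rewrite u_def in nz_u *.
exact/(expansion_unit_element scaleA basis_e)/(nonzero_expansion scaleA nz_u).
Qed.
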